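(* Let $G$ be a connected graph of order $n$ with exactly $k$ cut edges. If $SO(G)$ is maximum among all connected graphs of order $n$ with exactly $k$ cut edges, then every cut edge of $G$ is pendent (has an end vertex of degree one).
   Context: For a graph $G$, $d_G(w)$ denotes the degree of vertex $w$, and the Sombor index is $SO(G)=\sum_{ab\in E(G)}\sqrt{d_G(a)^2+d_G(b)^2}$. A cut edge is an edge whose deletion disconnects the graph. *)

From HB Require Import structures.
From mathcomp Require Import all_boot all_order all_algebra.
From mathcomp Require Import reals.
Set Implicit Arguments. Unset Strict Implicit. Unset Printing Implicit Defensive.
Import Order.TTheory GRing.Theory Num.Theory.

Definition simple_graph (n : nat) (g : rel 'I_n) : Prop :=
  symmetric g /\ irreflexive g.

Definition connected_graph (n : nat) (g : rel 'I_n) : Prop :=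
  forall a b : 'I_n, connect g a b.

Definition deg (n : nat) (g : rel 'I_n) (a : 'I_n) : nat := #|[set b | g a b]|.

(* each edge {a,b} is represented once, by the ordered pair with a < b *)
Definition edges (n : nat) (g : rel 'I_n) : {set 'I_n * 'I_n} :=
  [set p : 'I_n * 'I_n | (p.1 < p.2)%N && g p.1 p.2].

Definition remove_edge (n : nat) (g : rel 'I_n) (a b : 'I_n) : rel 'I_n :=
  [rel x y | g x y && ~~ (((x == a) && (y == b)) || ((x == b) && (y == a)))].

Definition is_cut_edge (n : nat) (g : rel 'I_n) (a b : 'I_n) : Prop :=
  g a b /\ ~ connected_graph (remove_edge g a b).

Definition num_cut_edges (n : nat) (g : rel 'I_n) : nat :=
  #|[set p in edges g |
       ~~ [forall x : 'I_n, forall y : 'I_n, connect (remove_edge g p.1 p.2) x y]]|.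

Definition sombor (R : realType) (n : nat) (g : rel 'I_n) : R :=
  (\sum_(p in edges g)
     Num.sqrt (((deg g p.1)%:R ^+ 2 + (deg g p.2)%:R ^+ 2) : R))%R.

From HB Require Import structures.
From mathcomp Require Import all_boot all_order all_algebra.
From mathcomp Require Import reals.
From mathcomp Require Import zify.
Import Order.TTheory GRing.Theory Num.Theory.
Set Implicit Arguments. Unset Strict Implicit. Unset Printing Implicit Defensive.

(* Let ab be a cut edge of the simple connected graph g, and
   "slide" every edge bw (w <> a) of g to aw, keeping the edge ab: the
   result g' is g with the edge ab contracted to a and b re-attached as a
   pendant vertex of a.  Because ab is a cut edge, a and b have no common
   neighbour, so the map glue (b |-> a) induces a bijection between the
   edges of g and those of g' which preserves being a cut edge; hence g' is
   again simple, connected, and has as many cut edges as g.  Degrees never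
   decrease along glue, and d'(a) = d(a) + d(b) - 1, d'(b) = 1, so every
   Sombor summand weakly increases, while the summand of ab increases
   strictly when d(a), d(b) >= 2, as
     (x + y - 1)^2 + 1 - (x^2 + y^2) = 2 (x - 1) (y - 1) > 0.
   So a Sombor-maximal g has no cut edge with two non-pendant ends. *)

Lemma connect_homo (T U : finType) (r : rel T) (r' : rel U) (h : T -> U) :
  (forall z w, r z w -> h z = h w \/ r' (h z) (h w)) ->
  forall x y, connect r x y -> connect r' (h x) (h y).
Proof.
move=> hom x y /connectP [p pth ->] {y}.
elim: p x pth => [|z p IH] x /=; first by move=> _; exact: connect0.
case/andP=> rxz /IH Hz; apply: connect_trans _ Hz.
by case: (hom _ _ rxz) => [->|e]; [exact: connect0 | exact: connect1].
Qed.

Lemma connect_invariant (T : finType) (r : rel T) (P : pred T) :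
  (forall z w, r z w -> P z = P w) -> forall x y, connect r x y -> P x = P y.
Proof.
move=> inv x y /connectP [p pth ->] {y}.
elim: p x pth => [|z p IH] x //= /andP [rxz /IH <-]; exact: inv.
Qed.

Lemma remove_edge_sym n (g : rel 'I_n) a b :
  symmetric g -> symmetric (remove_edge g a b).
Proof.
move=> sg x y; rewrite /remove_edge /= sg; congr (_ && ~~ _).
by rewrite orbC [(y == a) && _]andbC [(y == b) && _]andbC.
Qed.

Lemma remove_edge_swap n (g : rel 'I_n) a b :
  remove_edge g a b =2 remove_edge g b a.
Proof. by move=> x y; rewrite /remove_edge /= orbC. Qed.

Lemma connected_remove_edgeE n (g : rel 'I_n) a b :
  symmetric g -> connected_graph g -> g a b ->
  [forall x, forall y, connect (remove_edge g a b) x y] =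
  connect (remove_edge g a b) a b.
Proof.
move=> sg cg gab; apply/idP/idP; first by move/forallP/(_ a)/forallP/(_ b).
move=> cab; apply/forallP=> x; apply/forallP=> y.
apply: connect_sub (cg x y) => {}x {}y gxy.
case: (boolP ((x == a) && (y == b) || (x == b) && (y == a))) =>
  [/orP[/andP[/eqP-> /eqP->]|/andP[/eqP-> /eqP->]] // | ne].
  by rewrite (sym_connect_sym (remove_edge_sym a b sg)).
by apply: connect1; rewrite /remove_edge /= gxy ne.
Qed.

Lemma cut_edge_no_common_neighbour n (g : rel 'I_n) a b :
  symmetric g -> irreflexive g -> ~~ connect (remove_edge g a b) a b ->
  forall y, g a y -> g b y -> False.
Proof.
move=> sg ig cab y gay gby; apply: (negP cab).
have yb : y != b by apply: contraTneq gby => ->; rewrite ig.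
have ya : y != a by apply: contraTneq gay => ->; rewrite ig.
apply: (@connect_trans _ _ y); apply: connect1; rewrite /remove_edge /=.
- by rewrite gay !eqxx (negbTE yb) (negbTE ya) !andbF.
- have gyb : g y b by rewrite sg.
  by rewrite gyb !eqxx (negbTE yb) (negbTE ya).
Qed.

Lemma big_arcs (V : Type) (idx : V) (op : Monoid.com_law idx) n (r : rel 'I_n)
    (F : 'I_n * 'I_n -> V) :
  symmetric r -> irreflexive r -> (forall x y, F (x, y) = F (y, x)) ->
  \big[op/idx]_(p | r p.1 p.2) F p =
  op (\big[op/idx]_(p in edges r) F p) (\big[op/idx]_(p in edges r) F p).
Proof.
move=> sr ir sF.
rewrite (bigID (fun p : 'I_n * 'I_n => (p.1 < p.2)%N)) /=.
congr (op _ _); first by apply: eq_bigl => p; rewrite /edges inE andbC.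
rewrite (reindex_inj (h := fun p : 'I_n * 'I_n => (p.2, p.1))) /=; last first.
  by case=> ? ? [] ? ? [-> ->].
apply: eq_big => [[x y]|[x y] _] /=; last by rewrite sF.
rewrite /edges inE /= sr; case rxy: (r x y); rewrite ?andbF //=.
by case: (ltngtP x y) => // /val_inj exy; rewrite exy ir in rxy.
Qed.

Definition cut_pair n (r : rel 'I_n) (p : 'I_n * 'I_n) : bool :=
  ~~ [forall x, forall y, connect (remove_edge r p.1 p.2) x y].

Lemma cut_pair_swap n (r : rel 'I_n) x y : cut_pair r (x, y) = cut_pair r (y, x).
Proof.
rewrite /cut_pair /=; congr negb; apply: eq_forallb => u; apply: eq_forallb => v.
exact/eq_connect/remove_edge_swap.
Qed.

Lemma num_cut_edgesE n (r : rel 'I_n) :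
  num_cut_edges r = \sum_(p in edges r) (cut_pair r p : nat).
Proof.
rewrite /num_cut_edges -sum1_card [LHS]big_mkcond [RHS]big_mkcond /=.
by apply: eq_bigr => p _; rewrite inE /cut_pair; case: (p \in edges r).
Qed.

Lemma num_cut_edges_arcs n (r : rel 'I_n) : symmetric r -> irreflexive r ->
  \sum_(p | r p.1 p.2) (cut_pair r p : nat) = (num_cut_edges r).*2.
Proof.
by move=> sr ir; rewrite -addnn num_cut_edgesE; apply: big_arcs => // x y;
  rewrite cut_pair_swap.
Qed.

Definition sombor_weight (R : realType) n (r : rel 'I_n) (p : 'I_n * 'I_n) : R :=
  Num.sqrt (((deg r p.1)%:R ^+ 2 + (deg r p.2)%:R ^+ 2) : R).

Lemma sombor_weight_swap (R : realType) n (r : rel 'I_n) x y :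
  sombor_weight R r (x, y) = sombor_weight R r (y, x).
Proof. by rewrite /sombor_weight /= addrC. Qed.

Lemma sombor_arcs (R : realType) n (r : rel 'I_n) :
  symmetric r -> irreflexive r ->
  (\sum_(p | r p.1 p.2) sombor_weight R r p = sombor R r *+ 2)%R.
Proof.
by move=> sr ir; rewrite mulr2n; apply: big_arcs => //; apply: sombor_weight_swap.
Qed.

Lemma deg_gt0 n (g : rel 'I_n) x y : g x y -> (0 < deg g x)%N.
Proof. by move=> gxy; apply/card_gt0P; exists y; rewrite inE. Qed.

Definition glue n (a b x : 'I_n) := if x == b then a else x.

Definition ab_pair n (a b x y : 'I_n) :=
  ((x == a) && (y == b)) || ((x == b) && (y == a)).

(* Edges of the slide: ab itself, plus the glue-image of every edge of g,
   except that loops are dropped and b gets no other neighbour. *)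
Definition slide n (g : rel 'I_n) (a b : 'I_n) : rel 'I_n := fun x y =>
  ((x != b) && (y != b) && (x != y) &&
    [exists z, exists w, [&& glue a b z == x, glue a b w == y & g z w]])
  || ab_pair a b x y.

Definition slide_pair n (a b : 'I_n) (p : 'I_n * 'I_n) :=
  if ab_pair a b p.1 p.2 then p else (glue a b p.1, glue a b p.2).

Section Slide.

Variables (n : nat) (g : rel 'I_n) (a b : 'I_n).

Lemma glue_eq v v' : glue a b v = glue a b v' ->
  v = v' \/ (v = a /\ v' = b) \/ (v = b /\ v' = a).
Proof. by rewrite /glue; case: eqP => [->|vb]; case: eqP => [->|v'b]; auto. Qed.

Lemma ab_pair_sym x y : ab_pair a b x y = ab_pair a b y x.
Proof. by rewrite /ab_pair orbC; congr orb; apply: andbC. Qed.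

Lemma slide_ab_pair x y : ab_pair a b x y -> slide g a b x y.
Proof. by move=> h; apply/orP; right. Qed.

Lemma slide_intro x y z w : x != b -> y != b -> x != y ->
  g z w -> glue a b z = x -> glue a b w = y -> slide g a b x y.
Proof.
move=> xb yb xy gzw e1 e2; apply/orP; left; rewrite xb yb xy /=.
by apply/existsP; exists z; apply/existsP; exists w; rewrite e1 e2 !eqxx.
Qed.

Hypotheses (sg : symmetric g) (ig : irreflexive g) (cg : connected_graph g).
Hypotheses (gab : g a b) (ab_cut : ~~ connect (remove_edge g a b) a b).

Lemma ab_neq : a != b.
Proof. by apply: contraTneq gab => ->; rewrite ig. Qed.

Let no_common := cut_edge_no_common_neighbour sg ig ab_cut.

Lemma glue_neq_b v : glue a b v != b.
Proof. by rewrite /glue; case: ifP => [_|/negbT]; rewrite ?ab_neq. Qed.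

Lemma glue_ab_pair z w : ab_pair a b z w -> glue a b z = glue a b w.
Proof.
rewrite /ab_pair /glue => /orP[] /andP[/eqP-> /eqP->];
  by rewrite eqxx (negbTE ab_neq).
Qed.

Lemma connect_glue (r : rel 'I_n) :
  (forall u v, ab_pair a b u v -> r u v) ->
  forall v, connect r v (glue a b v) /\ connect r (glue a b v) v.
Proof.
move=> rab v; rewrite /glue; case: ifP => [/eqP->|_]; last by split; apply: connect0.
by split; apply: connect1; apply: rab; rewrite /ab_pair !eqxx ?orbT.
Qed.

Lemma glue_edge_inj z w x y : g z w -> g x y ->
  ~~ ab_pair a b z w -> ~~ ab_pair a b x y ->
  glue a b z = glue a b x -> glue a b w = glue a b y -> z = x /\ w = y.
Proof.
move=> gzw gxy nz nx /glue_eq e1 /glue_eq e2.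
have nc := no_common.
have no_common' u : g u a -> g u b -> False by rewrite ![g u _]sg; apply: no_common.
case: e1 => [?|[[??]|[??]]]; case: e2 => [?|[[??]|[??]]]; subst => //;
  rewrite ?ig in gzw gxy => //;
  try by move: nz nx; rewrite /ab_pair !eqxx ?orbT ?andbT.
all: by exfalso; eauto.
Qed.

Lemma slide_glue z w : g z w -> ~~ ab_pair a b z w ->
  slide g a b (glue a b z) (glue a b w).
Proof.
move=> gzw nz; apply: (slide_intro (z := z) (w := w)); rewrite ?glue_neq_b //.
apply/eqP => /glue_eq [e|[[e1 e2]|[e1 e2]]]; subst.
- by rewrite ig in gzw.
- by rewrite /ab_pair !eqxx in nz.
- by rewrite /ab_pair !eqxx orbT in nz.
Qed.

Lemma slide_sym : symmetric (slide g a b).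
Proof.
suff H x y : slide g a b x y -> slide g a b y x.
  by move=> x y; apply/idP/idP; apply: H.
case/orP => [/andP[/andP[/andP[xb yb] xy]] | ab'].
  case/existsP=> z /existsP[w /and3P[/eqP e1 /eqP e2 gzw]].
  by apply: (slide_intro (z := w) (w := z)); rewrite // 1?eq_sym // sg.
by apply/orP; right; rewrite ab_pair_sym.
Qed.

Lemma slide_irr : irreflexive (slide g a b).
Proof.
move=> x; apply/negbTE/negP => /orP[/andP[/andP[_]]|]; first by rewrite eqxx.
rewrite /ab_pair => /orP[] /andP[/eqP e1 /eqP e2].
  by move: ab_neq; rewrite -e1 e2 eqxx.
by move: ab_neq; rewrite -e2 e1 eqxx.
Qed.

Lemma slide_connected : connected_graph (slide g a b).
Proof.
move=> x y; have lnk := connect_glue slide_ab_pair.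
apply: connect_trans (proj1 (lnk x)) _; apply: connect_trans _ (proj2 (lnk y)).
apply: connect_homo (cg x y) => z w gzw.
case: (boolP (ab_pair a b z w)) => [/glue_ab_pair|nz]; first by left.
by right; apply: slide_glue.
Qed.

Lemma slide_simple : simple_graph (slide g a b).
Proof. by split; [exact: slide_sym | exact: slide_irr]. Qed.

Lemma slide_edges_image :
  [set p | slide g a b p.1 p.2] = slide_pair a b @: [set p | g p.1 p.2].
Proof.
apply/setP => -[x y]; rewrite inE /=; apply/idP/imsetP.
  case/orP => [/andP[/andP[/andP[xb yb] xy]] | ab'].
    case/existsP=> z /existsP[w /and3P[/eqP e1 /eqP e2 gzw]].
    have nz : ~~ ab_pair a b z w.
      by apply: contra xy => /glue_ab_pair; rewrite e1 e2 => ->.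
    by exists (z, w); rewrite ?inE // /slide_pair /= (negbTE nz) e1 e2.
  exists (x, y); last by rewrite /slide_pair /= ab'.
  by rewrite inE /=; move: ab'; rewrite /ab_pair => /orP[] /andP[/eqP-> /eqP->];
    rewrite // sg.
case=> -[z w]; rewrite inE /= => gzw e.
have [-> ->] : x = (slide_pair a b (z, w)).1 /\ y = (slide_pair a b (z, w)).2.
  by rewrite -e.
rewrite /slide_pair /=.
by case: (boolP (ab_pair a b z w)) => [|nz]; [apply: slide_ab_pair | apply: slide_glue].
Qed.

Lemma slide_pair_inj : {in [set p | g p.1 p.2] &, injective (slide_pair a b)}.
Proof.
move=> [x y] [x' y']; rewrite !inE /= => gxy gxy'; rewrite /slide_pair /=.
have hb v : (glue a b v == b) = false by apply/negbTE/glue_neq_b.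
case: (boolP (ab_pair a b x y)) => nx; case: (boolP (ab_pair a b x' y')) => nx' //.
- by case=> ex ey; move: nx; rewrite /ab_pair ex ey !hb !andbF.
- by case=> ex ey; move: nx'; rewrite /ab_pair -ex -ey !hb !andbF.
by case=> e1 e2; have [-> ->] := glue_edge_inj gxy gxy' nx nx' e1 e2.
Qed.

Lemma reindex_slide (V : Type) (idx : V) (op : Monoid.com_law idx)
    (F : 'I_n * 'I_n -> V) :
  \big[op/idx]_(p | slide g a b p.1 p.2) F p =
  \big[op/idx]_(p | g p.1 p.2) F (slide_pair a b p).
Proof.
have -> : \big[op/idx]_(p | slide g a b p.1 p.2) F p =
          \big[op/idx]_(p in [set p | slide g a b p.1 p.2]) F p.
  by apply: eq_bigl => p; rewrite inE.
rewrite slide_edges_image big_imset /=; last exact: slide_pair_inj.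
by apply: eq_bigl => p; rewrite inE.
Qed.

(* An edge xy other than ab is a cut edge of g iff its image is one of the
   slide: the two directions transport x-y paths avoiding the edge. *)
Lemma slide_reconnect x y : g x y -> ~~ ab_pair a b x y ->
  connect (remove_edge g x y) x y ->
  connect (remove_edge (slide g a b) (glue a b x) (glue a b y))
          (glue a b x) (glue a b y).
Proof.
move=> gxy nx; apply: connect_homo => z w.
rewrite /remove_edge /= => /andP[gzw nzw].
case: (boolP (ab_pair a b z w)) => [/glue_ab_pair|nz]; first by left.
right; rewrite slide_glue //=; apply/negP => /orP[] /andP[/eqP e1 /eqP e2].
  have [??] := glue_edge_inj gzw gxy nz nx e1 e2; subst.
  by rewrite !eqxx in nzw.
have gyx : g y x by rewrite sg.
have nyx : ~~ ab_pair a b y x by rewrite ab_pair_sym.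
have [??] := glue_edge_inj gzw gyx nz nyx e1 e2; subst.
by rewrite !eqxx orbT in nzw.
Qed.

Lemma slide_reconnect_back x y : ~~ ab_pair a b x y ->
  connect (remove_edge (slide g a b) (glue a b x) (glue a b y))
          (glue a b x) (glue a b y) ->
  connect (remove_edge g x y) x y.
Proof.
move=> nx c.
have rab u v : ab_pair a b u v -> remove_edge g x y u v.
  rewrite /ab_pair => /orP[] /andP[/eqP-> /eqP->];
  rewrite /remove_edge /= ?gab ?(sg b a) ?gab /=; apply: contra nx;
  by case/orP => /andP[/eqP<- /eqP<-]; rewrite /ab_pair !eqxx ?orbT.
have lnk := connect_glue rab.
apply: connect_trans (proj1 (lnk x)) _; apply: connect_trans _ (proj2 (lnk y)).
apply: connect_sub c => z' w'; rewrite /remove_edge /= => /andP[gzw nm].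
case/orP: gzw => [/andP[_] | ab']; last by apply: connect1; apply: rab.
case/existsP=> z /existsP[w /and3P[/eqP e1 /eqP e2 gzw]]; subst z' w'.
apply: connect_trans (proj2 (lnk z)) _; apply: connect_trans _ (proj1 (lnk w)).
apply: connect1; rewrite /remove_edge /= gzw /=; apply: contra nm.
by case/orP => /andP[/eqP-> /eqP->]; rewrite !eqxx ?orbT.
Qed.

(* The edge ab stays a cut edge: b is isolated once it is removed. *)
Lemma slide_cut_ab : cut_pair (slide g a b) (a, b).
Proof.
rewrite /cut_pair /= connected_remove_edgeE //; last first.
- by apply: slide_ab_pair; rewrite /ab_pair !eqxx.
- exact: slide_connected.
- exact: slide_sym.
have inv z w : remove_edge (slide g a b) a b z w -> (z == b) = (w == b).
  rewrite /remove_edge /= => /andP[/orP[/andP[/andP[/andP[zb wb] _] _]|ab'] nm].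
    by rewrite (negbTE zb) (negbTE wb).
  by move: ab' nm; rewrite /ab_pair => /orP[] /andP[/eqP-> /eqP->]; rewrite !eqxx ?orbT.
by apply/negP => /(connect_invariant inv) /=; rewrite eqxx (negbTE ab_neq).
Qed.

Lemma cut_pair_slide p : g p.1 p.2 ->
  cut_pair (slide g a b) (slide_pair a b p) = cut_pair g p.
Proof.
case: p => x y /= gxy; case: (boolP (ab_pair a b x y)) => [abxy|nx].
  have cut_g : cut_pair g (a, b) by rewrite /cut_pair /= connected_remove_edgeE.
  rewrite /slide_pair /= abxy; move: abxy; rewrite /ab_pair.
  case/orP => /andP[/eqP-> /eqP->]; first by rewrite slide_cut_ab cut_g.
  by rewrite cut_pair_swap slide_cut_ab cut_pair_swap cut_g.
rewrite /slide_pair /= (negbTE nx) /cut_pair /= !connected_remove_edgeE //.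
- by congr negb; apply/idP/idP; [exact: slide_reconnect_back | exact: slide_reconnect].
- exact: slide_sym.
- exact: slide_connected.
- exact: slide_glue.
Qed.

Lemma num_cut_edges_slide : num_cut_edges (slide g a b) = num_cut_edges g.
Proof.
apply: double_inj.
rewrite -num_cut_edges_arcs; [|exact: slide_sym | exact: slide_irr].
rewrite -num_cut_edges_arcs // reindex_slide.
by apply: eq_bigr => p gp; rewrite cut_pair_slide.
Qed.

Lemma deg_slide_b : deg (slide g a b) b = 1%N.
Proof.
rewrite /deg (_ : [set w | slide g a b b w] = [set a]) ?cards1 //.
apply/setP => w; rewrite !inE /slide /ab_pair eqxx /= (eq_sym b a) (negbTE ab_neq) /=.
by rewrite eq_sym.
Qed.

Lemma deg_slide_a : (deg g a + deg g b <= (deg (slide g a b) a).+1)%N.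
Proof.
have ab := ab_neq; set A := [set w | g a w]; set B := [set w | g b w] :\ a.
have AB0 : A :&: B = set0.
  apply/setP => w; rewrite !inE; apply/negbTE/negP => /and3P[gaw _ gbw].
  exact: no_common gaw gbw.
have dB : deg g b = (#|B|).+1 by rewrite /deg (cardsD1 a) inE sg gab.
have sub : A :|: B \subset [set w | slide g a b a w].
  apply/subsetP => w; rewrite !inE => /orP[gaw|/andP[wa gbw]].
    case: (eqVneq w b) => [->|wb]; first by apply: slide_ab_pair; rewrite /ab_pair !eqxx.
    apply: (slide_intro (z := a) (w := w)) => //;
      rewrite /glue ?(negbTE ab) ?(negbTE wb) //.
    by apply: contraTneq gaw => <-; rewrite ig.
  have wb : w != b by apply: contraTneq gbw => ->; rewrite ig.
  apply: (slide_intro (z := b) (w := w)) => //; rewrite /glue ?eqxx ?(negbTE wb) //.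
  by rewrite eq_sym.
have e := cardsUI A B; rewrite AB0 cards0 addn0 in e.
have le := subset_leq_card sub.
rewrite dB /deg -/A; lia.
Qed.

Lemma deg_slide_other v : v != a -> v != b -> (deg g v <= deg (slide g a b) v)%N.
Proof.
move=> va vb; rewrite /deg -(card_in_imset (f := glue a b) (D := [set w | g v w])).
  apply: subset_leq_card; apply/subsetP => w' /imsetP [w]; rewrite inE => gvw ->.
  rewrite inE; apply: (slide_intro (z := v) (w := w)) => //; rewrite ?glue_neq_b //.
  - rewrite /glue; case: ifP => _ //.
    by apply: contraTneq gvw => <-; rewrite ig.
  - by rewrite /glue (negbTE vb).
by move=> w1 w2; rewrite !inE => g1 g2 /glue_eq [//|[[??]|[??]]]; subst;
  case: (no_common (y := v)); rewrite sg.
Qed.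

Lemma deg_glue v : (deg g v <= deg (slide g a b) (glue a b v))%N.
Proof.
have da := deg_slide_a.
have pa := deg_gt0 gab; have pb : (0 < deg g b)%N by apply: (@deg_gt0 _ _ _ a); rewrite sg.
rewrite /glue; case: (eqVneq v b) => [->|vb]; first by lia.
case: (eqVneq v a) => [->|va]; first by lia.
exact: deg_slide_other.
Qed.

Lemma sombor_weight_slide (R : realType) x y : ~~ ab_pair a b x y ->
  (sombor_weight R g (x, y) <= sombor_weight R (slide g a b) (slide_pair a b (x, y)))%R.
Proof.
move=> nx; rewrite /slide_pair /= (negbTE nx) /sombor_weight /=.
rewrite ler_sqrt ?addr_ge0 ?exprn_ge0 ?ler0n //.
by rewrite -!natrX -!natrD ler_nat leq_add // leq_exp2r // deg_glue.
Qed.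

Lemma sombor_weight_slide_ab (R : realType) :
  deg g a != 1%N -> deg g b != 1%N ->
  (sombor_weight R g (a, b) < sombor_weight R (slide g a b) (a, b))%R.
Proof.
move=> /eqP da1 /eqP db1; have da := deg_slide_a.
have pa := deg_gt0 gab; have pb : (0 < deg g b)%N by apply: (@deg_gt0 _ _ _ a); rewrite sg.
rewrite /sombor_weight /= ltr_sqrt; last first.
  by rewrite ltr_pwDr ?exprn_gt0 ?ltr0n ?deg_slide_b ?exprn_ge0 ?ler0n.
rewrite -!natrX -!natrD ltr_nat deg_slide_b.
move: da1 db1 da pa pb; set x := deg g a; set y := deg g b; set z := deg _ a.
by move=> *; nia.
Qed.

Lemma sombor_slide_gt (R : realType) :
  deg g a != 1%N -> deg g b != 1%N -> (sombor R g < sombor R (slide g a b))%R.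
Proof.
move=> da1 db1.
rewrite -(ltr_pMn2r (isT : (0 < 2)%N)) -sombor_arcs // -sombor_arcs;
  [|exact: slide_sym | exact: slide_irr].
rewrite reindex_slide (bigD1 (a, b)) //= [X in (_ < X)%R](bigD1 (a, b)) //=.
have -> : slide_pair a b (a, b) = (a, b) by rewrite /slide_pair /ab_pair /= !eqxx.
apply: ltr_leD; first exact: sombor_weight_slide_ab.
apply: ler_sum => -[x y] /andP[gxy /= nab].
case: (boolP (ab_pair a b x y)) => [abxy|nx]; last exact: sombor_weight_slide.
have [-> ->] : (x, y) = (b, a).
  by move: abxy nab; rewrite /ab_pair => /orP[] /andP[/eqP-> /eqP->]; rewrite ?eqxx.
rewrite /slide_pair /ab_pair /= !eqxx orbT sombor_weight_swap.
by rewrite [X in (_ <= X)%R]sombor_weight_swap ltW // sombor_weight_slide_ab.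
Qed.

End Slide.

Unset Implicit Arguments.

Theorem proposition3p2 (R : realType) (n k : nat) (g : rel 'I_n) :
  simple_graph g -> connected_graph g -> num_cut_edges g = k ->
  (forall g' : rel 'I_n, simple_graph g' -> connected_graph g' ->
     num_cut_edges g' = k -> (sombor R g' <= sombor R g)%R) ->
  forall a b : 'I_n, is_cut_edge g a b -> deg g a = 1%N \/ deg g b = 1%N.
Proof.
move=> [sg ig] cg hk hmax a b [gab ncut].
have ab_cut : ~~ connect (remove_edge g a b) a b.
  apply/negP => c; apply: ncut => x y.
  by move: c; rewrite -(connected_remove_edgeE sg cg gab) => /forallP/(_ x)/forallP/(_ y).
case: (eqVneq (deg g a) 1%N) => [|da1]; first by left.
case: (eqVneq (deg g b) 1%N) => [|db1]; first by right.
have hk' : num_cut_edges (slide g a b) = k by rewrite num_cut_edges_slide.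
have := hmax _ (slide_simple sg ig gab) (slide_connected ig cg gab) hk'.
by rewrite leNgt sombor_slide_gt.
Qed.
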